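(* Let $m>0$ and $a_1,a_2\in(-\infty,4m^2)$. Define on $I=(-\infty,4m^2)$ the function $A(\gamma):=(a_1-\gamma)(a_2-\gamma)J(\gamma)$. Then $A$ is convex on $I$ (indeed $A''(\gamma)=\int_{4m^2}^\infty\rho(M)\frac{2(M-a_1)(M-a_2)}{(M-\gamma)^3}dM>0$), $A'$ is monotonically increasing, $\lim_{\gamma\to-\infty}A'(\gamma)=-\infty$, $\lim_{\gamma\to4m^2}A'(\gamma)=+\infty$, and hence $A'(I)=\mathbb{R}$.
   Context: $\rho(M)=\frac{1}{16\pi^2}\sqrt{1-\frac{4m^2}{M}}\frac1M$ for $M\ge4m^2$, and $J(\gamma)=\int_{4m^2}^\infty\frac{\rho(M)}{M-\gamma}dM$ for $\gamma<4m^2$. *)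

From Stdlib Require Import Reals.
From Coquelicot Require Import Coquelicot.
Open Scope R_scope.

Definition rho (m M : R) : R :=
  / (16 * PI ^ 2) * sqrt (1 - 4 * m ^ 2 / M) * / M.

Definition J (m g : R) : R :=
  RInt_gen (fun M => rho m M / (M - g)) (at_point (4 * m ^ 2)) (Rbar_locally p_infty).

Definition Afun (m a1 a2 g : R) : R := (a1 - g) * (a2 - g) * J m g.

From Stdlib Require Import Reals Lra Psatz.
From Coquelicot Require Import Coquelicot.
Open Scope R_scope.

(* With mu = 4 m^2, the substitution M = mu / (1 - v^2) maps [0, 1) onto [mu, +oo) and turns
   J(g) into the proper integral over [0, 1] of the smooth kernel
   2 c v^2 / (mu - g (1 - v^2)), c = 1 / (16 PI^2).  Differentiating twice under the integral
   sign gives A' and A'' as integrals over [0, 1]; the kernel of A'' is positive, and it is the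
   image of rho(M) 2 (M - a1) (M - a2) / (M - g)^3 under the same substitution.  Hence A' is
   strictly increasing and A is convex by the mean value theorem.  As g -> -oo the kernel of A'
   is dominated by one whose integral is -(c/2) ln |g| + O(1); as g -> mu it dominates a
   multiple of v^2 / (mu v^2 + (mu - g))^2, whose integral grows like (mu - g)^(-1/2).  The
   intermediate value theorem then shows that A' maps (-oo, mu) onto R. *)

Lemma ex_derive_continuous_R (f : R -> R) x : ex_derive f x -> continuous f x.
Proof. apply (ex_derive_continuous (K := R_AbsRing) (V := R_NormedModule)). Qed.

Lemma continuous_mult_R (f g : R -> R) x :
  continuous f x -> continuous g x -> continuous (fun y => f y * g y) x.
Proof. apply (continuous_mult (U := R_UniformSpace) (K := R_AbsRing)). Qed.

Lemma Rmin_Rmax_bounds (a b x : R) : a <= b -> Rmin a b <= x <= Rmax a b -> a <= x <= b.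
Proof. intros Hab. rewrite Rmin_left, Rmax_right by exact Hab. easy. Qed.

Lemma ex_RInt_continuous_on (f : R -> R) a b : a <= b ->
  (forall x, a <= x <= b -> continuous f x) -> ex_RInt f a b.
Proof.
  intros Hab Hf. apply (ex_RInt_continuous (V := R_CompleteNormedModule)).
  intros x Hx. apply Hf, Rmin_Rmax_bounds; easy.
Qed.

Lemma Rdiv_le_cross (a b x y : R) : 0 < x -> 0 < y -> a * y <= b * x -> a / x <= b / y.
Proof.
  intros Hx Hy H. apply Rmult_le_reg_r with (x * y); [nra|].
  replace (a / x * (x * y)) with (a * y) by (field; lra).
  replace (b / y * (x * y)) with (b * x) by (field; lra). easy.
Qed.

Lemma continuity_pt_of_ex_derive (f : R -> R) x : ex_derive f x -> continuity_pt f x.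
Proof. intros Hf. now apply continuity_pt_filterlim, ex_derive_continuous_R. Qed.

Section OnHalfLine.
Variables (f : R -> R) (b : R).

Lemma incr_of_derive_pos (df : R -> R) :
  (forall x, x < b -> is_derive f x (df x)) -> (forall x, x < b -> 0 < df x) ->
  forall x y, x < y -> y < b -> f x < f y.
Proof.
  intros Hd Hpos x y Hxy Hy.
  destruct (MVT_gen f x y df) as [c [Hc Hfc]];
    rewrite ?Rmin_left, ?Rmax_right in * by lra.
  - intros z Hz. apply Hd. lra.
  - intros z Hz. apply continuity_pt_of_ex_derive. eexists. apply Hd. lra.
  - specialize (Hpos c ltac:(lra)). nra.
Qed.

Lemma convex_of_derive_nondecr :
  (forall x, x < b -> ex_derive f x) ->
  (forall x y, x < y -> y < b -> Derive f x <= Derive f y) ->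
  forall x y t, x < b -> y < b -> 0 <= t <= 1 ->
    f (t * x + (1 - t) * y) <= t * f x + (1 - t) * f y.
Proof.
  intros Hd Hmono.
  assert (Hmvt : forall x y, x <= y -> y < b ->
            exists c, x <= c <= y /\ f y - f x = Derive f c * (y - x)).
  { intros x y Hxy Hy. destruct (MVT_gen f x y (Derive f)) as [c [Hc Hfc]];
      rewrite ?Rmin_left, ?Rmax_right in * by lra.
    - intros z Hz. apply Derive_correct, Hd. lra.
    - intros z Hz. apply continuity_pt_of_ex_derive, Hd. lra.
    - now exists c. }
  assert (Hle : forall x y t, x <= y -> y < b -> 0 <= t <= 1 ->
            f (t * x + (1 - t) * y) <= t * f x + (1 - t) * f y).
  { intros x y t Hxy Hy Ht. set (z := t * x + (1 - t) * y).
    destruct (Hmvt x z) as [c1 [Hc1 Hf1]]; [unfold z; nra|unfold z; nra|].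
    destruct (Hmvt z y) as [c2 [Hc2 Hf2]]; [unfold z; nra|easy|].
    assert (Hc12 : Derive f c1 <= Derive f c2).
    { destruct (Rle_lt_or_eq_dec c1 c2) as [Hlt|<-]; [lra|apply Hmono; lra|lra]. }
    replace (z - x) with ((1 - t) * (y - x)) in Hf1 by (unfold z; ring).
    replace (y - z) with (t * (y - x)) in Hf2 by (unfold z; ring).
    assert (0 <= t * (1 - t) * (y - x) * (Derive f c2 - Derive f c1))
      by (repeat apply Rmult_le_pos; lra).
    nra. }
  intros x y t Hx Hy Ht. destruct (Rle_lt_dec x y) as [Hxy|Hyx]; [now apply Hle|].
  replace (t * x + (1 - t) * y) with ((1 - t) * y + (1 - (1 - t)) * x) by ring.
  specialize (Hle y x (1 - t) ltac:(lra) Hx ltac:(lra)). lra.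
Qed.

Lemma onto_of_lim_m_infty_at_left :
  (forall x, x < b -> continuity_pt f x) ->
  is_lim f m_infty m_infty -> filterlim f (at_left b) (Rbar_locally p_infty) ->
  forall y, exists x, x < b /\ f x = y.
Proof.
  intros Hc Hlo Hhi y.
  destruct (Hlo (fun z => z < y)) as [N HN]; [now exists y|].
  destruct (Hhi (fun z => y < z)) as [eps Heps]; [now exists y|].
  pose proof (cond_pos eps).
  set (x1 := Rmin (N - 1) (b - 1)).
  set (x2 := Rmax (b - eps / 2) ((x1 + b) / 2)).
  assert (Hx1 : x1 <= N - 1 /\ x1 <= b - 1) by (split; [apply Rmin_l|apply Rmin_r]).
  assert (Hx2 : b - eps / 2 <= x2 /\ (x1 + b) / 2 <= x2) by (split; [apply Rmax_l|apply Rmax_r]).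
  assert (Hx2b : x2 < b) by (apply Rmax_lub_lt; lra).
  assert (Hf1 : f x1 < y) by (apply HN; lra).
  assert (Hf2 : y < f x2).
  { apply Heps; [|easy]. change (Rabs (x2 - b) < eps). rewrite Rabs_left; lra. }
  destruct (Ranalysis5.IVT_interv (fun x => f x - y) x1 x2) as [x [Hx Hfx]]; try lra.
  - intros z Hz. apply continuity_pt_minus; [apply Hc; lra|apply continuity_pt_const].
    now intros u v.
  - exists x. split; lra.
Qed.

End OnHalfLine.

Lemma RInt_tail_bound (G : R -> R) :
  (forall v, 0 <= v <= 1 -> continuous G v) ->
  exists B, 0 <= B /\
    forall s, 0 <= s <= 1 -> Rabs (RInt G 0 1 - RInt G 0 s) <= (1 - s) * B.
Proof.
  intros HG.
  destruct (continuity_ab_maj (fun v => Rabs (G v)) 0 1) as [v0 [Hmax _]]; [lra| |].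
  { intros v Hv. apply continuity_pt_filterlim, (continuous_comp G Rabs).
    - apply HG; lra.
    - apply continuous_Rabs. }
  exists (Rabs (G v0)). split; [apply Rabs_pos|]. intros s Hs.
  rewrite <- (RInt_Chasles G 0 s 1) by (apply ex_RInt_continuous_on; intros; try apply HG; lra).
  change (Rabs (RInt G 0 s + RInt G s 1 - RInt G 0 s) <= (1 - s) * Rabs (G v0)).
  rewrite Rplus_minus_l.
  apply abs_RInt_le_const; [lra| |].
  - apply ex_RInt_continuous_on; intros; [lra|apply HG; lra].
  - intros v Hv. apply Hmax. lra.
Qed.

Definition to_half_line (mu v : R) : R := mu / (1 - v ^ 2).
Definition from_half_line (mu y : R) : R := sqrt (1 - mu / y).

Lemma from_half_line_spec mu y : 0 < mu < y ->
  0 <= from_half_line mu y < 1 /\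
  to_half_line mu (from_half_line mu y) = y /\
  1 - from_half_line mu y <= mu / y.
Proof.
  intros Hmu. unfold from_half_line, to_half_line.
  assert (Hr : 0 < mu / y < 1).
  { split; [apply Rdiv_lt_0_compat; lra|]. apply Rlt_div_l; lra. }
  assert (Hsq : sqrt (1 - mu / y) ^ 2 = 1 - mu / y) by (apply pow2_sqrt; lra).
  assert (Hs1 : sqrt (1 - mu / y) < 1).
  { rewrite <- sqrt_1 at 2. apply sqrt_lt_1; lra. }
  pose proof (sqrt_pos (1 - mu / y)).
  split; [lra|]. split; [rewrite Hsq; field; lra | nra].
Qed.

Lemma is_RInt_to_half_line (mu y : R) (f G : R -> R) : 0 < mu < y ->
  (forall M, mu <= M -> continuous f M) ->
  (forall v, 0 <= v < 1 -> G v = 2 * mu * v / (1 - v ^ 2) ^ 2 * f (to_half_line mu v)) ->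
  is_RInt f mu y (RInt G 0 (from_half_line mu y)).
Proof.
  intros Hy Hf HG. destruct (from_half_line_spec mu y Hy) as [Hs [Hinv _]].
  set (s := from_half_line mu y) in *.
  assert (Hsub : is_RInt (fun v => scal (2 * mu * v / (1 - v ^ 2) ^ 2) (f (to_half_line mu v)))
                   0 s (RInt f (to_half_line mu 0) (to_half_line mu s))).
  { apply (is_RInt_comp (V := R_CompleteNormedModule));
      intros v Hv; apply Rmin_Rmax_bounds in Hv; try lra;
      assert (0 < 1 - v ^ 2) by nra.
    - apply Hf. unfold to_half_line. apply Rle_div_r; nra.
    - split.
      + unfold to_half_line. auto_derive; [lra|field; lra].
      + apply ex_derive_continuous_R. auto_derive. intro; nra. }
  replace (to_half_line mu 0) with mu in Hsub by (unfold to_half_line; field).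
  rewrite Hinv in Hsub.
  replace (RInt G 0 s) with (RInt f mu y).
  - apply (RInt_correct (V := R_CompleteNormedModule)), ex_RInt_continuous_on; [lra|].
    intros M HM. apply Hf. lra.
  - symmetry. apply is_RInt_unique, is_RInt_ext with (2 := Hsub).
    intros v Hv. rewrite Rmin_left, Rmax_right in Hv by lra. rewrite HG by lra. easy.
Qed.

Lemma is_RInt_gen_to_half_line (mu : R) (f G : R -> R) : 0 < mu ->
  (forall M, mu <= M -> continuous f M) ->
  (forall v, 0 <= v < 1 -> G v = 2 * mu * v / (1 - v ^ 2) ^ 2 * f (to_half_line mu v)) ->
  (forall v, 0 <= v <= 1 -> continuous G v) ->
  is_RInt_gen f (at_point mu) (Rbar_locally p_infty) (RInt G 0 1).
Proof.
  intros Hmu Hf HG HGc.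
  apply filterlimi_lim_ext_loc with (f := fun ab => RInt G 0 (from_half_line mu (snd ab))).
  { apply Filter_prod with (Q := fun x => x = mu) (R := fun y => mu < y).
    - easy.
    - exists mu. easy.
    - intros x y -> Hy. apply is_RInt_to_half_line; easy. }
  destruct (RInt_tail_bound G HGc) as [B [HB0 HB]].
  apply filterlim_locally. intros eps. pose proof (cond_pos eps) as Heps.
  apply Filter_prod with (Q := fun x => x = mu)
    (R := fun y => Rmax mu (mu * (B + 1) / eps) < y);
    [easy|now exists (Rmax mu (mu * (B + 1) / eps))|].
  intros x y _ Hy. simpl.
  apply Rmax_Rlt in Hy as [Hy Hy'].
  destruct (from_half_line_spec mu y (conj Hmu Hy)) as [Hs [_ Hs1]].
  change (Rabs (RInt G 0 (from_half_line mu y) - RInt G 0 1) < eps).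
  rewrite Rabs_minus_sym. eapply Rle_lt_trans; [apply HB; lra|].
  apply Rle_lt_trans with (mu / y * B); [apply Rmult_le_compat_r; lra|].
  apply Rlt_div_l in Hy'; [|easy].
  replace (mu / y * B) with (mu * B / y) by (field; lra).
  apply Rlt_div_l; nra.
Qed.

Lemma is_RInt_affine_ratio (c mu e : R) : 0 < mu -> 0 < e ->
  is_RInt (fun v => c * e * (2 * v - 1) / (mu + 2 * e * (1 - v))) 0 1
    (c * ((1 + mu / e) / 2 * (ln (mu + 2 * e) - ln mu) - 1)).
Proof.
  intros Hmu He.
  set (F := fun v => - c * ((e + mu) / (2 * e) * ln (mu + 2 * e * (1 - v)) + v)).
  replace (c * ((1 + mu / e) / 2 * (ln (mu + 2 * e) - ln mu) - 1)) with (minus (F 1) (F 0)).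
  - apply (is_RInt_derive (V := R_CompleteNormedModule));
      intros v Hv; apply Rmin_Rmax_bounds in Hv; [|lra| |lra];
      assert (0 <= e * (1 - v)) by (apply Rmult_le_pos; lra).
    + unfold F. auto_derive; [lra|field; lra].
    + apply ex_derive_continuous_R. auto_derive. lra.
  - unfold minus, plus, opp, F. simpl.
    replace (mu + 2 * e * (1 - 1)) with mu by ring.
    replace (mu + 2 * e * (1 - 0)) with (mu + 2 * e) by ring. field. lra.
Qed.

Lemma is_RInt_sq_ratio (a e : R) : 0 < a -> 0 < e ->
  is_RInt (fun v => v ^ 2 / (a * v ^ 2 + e) ^ 2) 0 1
    ((atan (sqrt (a / e)) / sqrt (a * e) - 1 / (a + e)) / (2 * a)).
Proof.
  intros Ha He. set (k := sqrt (a / e)).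
  assert (Hk : 0 < k) by (apply sqrt_lt_R0, Rdiv_lt_0_compat; lra).
  assert (Hk2 : k ^ 2 = a / e) by (apply pow2_sqrt, Rlt_le, Rdiv_lt_0_compat; lra).
  assert (Hek : sqrt (a * e) = e * k).
  { apply sqrt_lem_1; [nra|nra|]. replace (e * k * (e * k)) with (e ^ 2 * k ^ 2) by ring.
    rewrite Hk2. field. lra. }
  rewrite Hek.
  set (F := fun v => (atan (k * v) / (e * k) - v / (a * v ^ 2 + e)) / (2 * a)).
  replace ((atan k / (e * k) - 1 / (a + e)) / (2 * a)) with (minus (F 1) (F 0)).
  - apply (is_RInt_derive (V := R_CompleteNormedModule)); intros v Hv;
      assert (0 < a * v ^ 2 + e) by nra.
    + assert (Ha' : a = e * k ^ 2) by (rewrite Hk2; field; lra).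
      unfold F. auto_derive; [lra|]. rewrite Ha' in *.
      unfold Rsqr. field. repeat split; apply Rgt_not_eq; nra.
    + apply ex_derive_continuous_R. auto_derive. intro Hz. nra.
  - unfold minus, plus, opp, F. simpl. rewrite Rmult_1_r, Rmult_0_r, atan_0.
    field. repeat split; apply Rgt_not_eq; nra.
Qed.

Lemma RInt_sq_ratio_ge (a e : R) : 0 < e <= a ->
  (PI / 4 / sqrt (a * e) - 1 / a) / (2 * a) <= RInt (fun v => v ^ 2 / (a * v ^ 2 + e) ^ 2) 0 1.
Proof.
  intros He. rewrite (is_RInt_unique _ _ _ _ (is_RInt_sq_ratio a e ltac:(lra) ltac:(lra))).
  assert (Hs : 0 < sqrt (a * e)) by (apply sqrt_lt_R0; nra).
  assert (Hatan : PI / 4 <= atan (sqrt (a / e))).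
  { assert (Hk1 : 1 <= sqrt (a / e)).
    { rewrite <- sqrt_1. apply sqrt_le_1_alt, Rle_div_r; lra. }
    rewrite <- atan_1. destruct (Rle_lt_or_eq_dec _ _ Hk1) as [Hlt|<-]; [|lra].
    left. now apply atan_increasing. }
  apply Rmult_le_compat_r; [left; apply Rinv_0_lt_compat; lra|].
  apply Rplus_le_compat.
  - apply Rmult_le_compat_r; [left; now apply Rinv_0_lt_compat|easy].
  - apply Ropp_le_contravar, Rmult_le_compat_l; [lra|]. apply Rinv_le_contravar; lra.
Qed.

Lemma is_lim_ln_gap_m_infty (c mu : R) : 0 < c -> 0 < mu ->
  is_lim (fun g => c * (1 - (ln (mu + 2 * (mu - g)) - ln mu) / 2)) m_infty m_infty.
Proof.
  intros Hc Hmu P [M HP]. set (T := ln mu + 2 * (1 - M / c)).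
  exists ((3 * mu - exp T) / 2). intros g Hg. apply HP.
  assert (HT : T < ln (mu + 2 * (mu - g))).
  { rewrite <- (ln_exp T) at 1. apply ln_increasing; [apply exp_pos|lra]. }
  assert (M = c * (1 - (T - ln mu) / 2)) by (unfold T; field; lra).
  nra.
Qed.

Lemma filterlim_inv_sqrt_at_left (K mu : R) : 0 < K -> 0 < mu ->
  filterlim (fun g => K * ((PI / 4 / sqrt (mu * (mu - g)) - 1 / mu) / (2 * mu)))
    (at_left mu) (Rbar_locally p_infty).
Proof.
  intros HK Hmu P [M HP]. pose proof PI_RGT_0.
  set (T := 2 * mu * (Rabs M / K) + 1 / mu + 1).
  assert (HT : 0 < T).
  { assert (0 <= Rabs M / K) by (apply Rle_div_r; [lra|rewrite Rmult_0_l; apply Rabs_pos]).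
    assert (0 < 1 / mu) by (apply Rdiv_lt_0_compat; lra). unfold T. nra. }
  set (s := PI / 4 / T).
  assert (Hs : 0 < s) by (apply Rdiv_lt_0_compat; lra).
  assert (Hd : 0 < s ^ 2 / mu) by (apply Rdiv_lt_0_compat; [apply pow_lt|]; lra).
  exists (mkposreal _ Hd). intros g Hball Hg. apply HP.
  change (Rabs (g - mu) < s ^ 2 / mu) in Hball.
  rewrite Rabs_left in Hball by lra.
  assert (Hsq : 0 < sqrt (mu * (mu - g)) < s).
  { split; [apply sqrt_lt_R0; nra|]. rewrite <- (sqrt_pow2 s) by lra.
    apply sqrt_lt_1_alt. split; [nra|]. apply Rlt_div_r in Hball; [nra|lra]. }
  assert (HX : T < PI / 4 / sqrt (mu * (mu - g))).
  { destruct Hsq as [Hsq0 Hsq]. apply Rlt_div_r; [lra|].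
    unfold s in Hsq. apply Rlt_div_r in Hsq; lra. }
  set (X := PI / 4 / sqrt (mu * (mu - g))) in *.
  assert (HKX : 2 * mu * Rabs M < K * (X - 1 / mu)).
  { replace (2 * mu * Rabs M) with (K * (2 * mu * (Rabs M / K))) by (field; lra).
    apply Rmult_lt_compat_l; [lra|]. unfold T in HX. lra. }
  apply Rmult_lt_reg_r with (2 * mu); [lra|].
  replace (K * ((X - 1 / mu) / (2 * mu)) * (2 * mu)) with (K * (X - 1 / mu)) by (field; lra).
  pose proof (Rle_abs M). nra.
Qed.

Lemma continuity_2d_pt_pow (f : R -> R -> R) x y n :
  continuity_2d_pt f x y -> continuity_2d_pt (fun u v => f u v ^ n) x y.
Proof.
  intros Hf. induction n as [|n IH]; simpl.
  - apply continuity_2d_pt_const.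
  - apply continuity_2d_pt_mult; easy.
Qed.

Ltac continuity_2d :=
  repeat match goal with
  | |- continuity_2d_pt (fun u v => _ + _) _ _ => apply continuity_2d_pt_plus
  | |- continuity_2d_pt (fun u v => _ - _) _ _ => apply continuity_2d_pt_minus
  | |- continuity_2d_pt (fun u v => _ * _) _ _ => apply continuity_2d_pt_mult
  | |- continuity_2d_pt (fun u v => - _) _ _ => apply continuity_2d_pt_opp
  | |- continuity_2d_pt (fun u v => / _) _ _ => apply continuity_2d_pt_inv
  | |- continuity_2d_pt (fun u v => _ ^ _) _ _ => apply continuity_2d_pt_pow
  | |- continuity_2d_pt (fun u v => u) _ _ => apply continuity_2d_pt_id1
  | |- continuity_2d_pt (fun u v => v) _ _ => apply continuity_2d_pt_id2
  | |- continuity_2d_pt (fun u v => _) _ _ => apply continuity_2d_pt_const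
  end.

Definition rho_coef : R := / (16 * PI ^ 2).

Definition den (mu g v : R) : R := mu - g * (1 - v ^ 2).

Definition dA_weight (mu a1 a2 v : R) : R :=
  (mu - a1) * (mu - a2) * (1 - v ^ 2) + mu * (2 * mu - a1 - a2) * v ^ 2.

Definition J_ker (mu g v : R) : R := 2 * rho_coef * v ^ 2 / den mu g v.

Definition A_ker (mu a1 a2 g v : R) : R := (a1 - g) * (a2 - g) * J_ker mu g v.

(* The numerator of [d/dg A_ker] rearranged so that [g] enters only through its last term. *)
Definition dA_ker (mu a1 a2 g v : R) : R :=
  2 * rho_coef * v ^ 2 * (dA_weight mu a1 a2 v - (mu - g) * (den mu g v + mu * v ^ 2))
    / den mu g v ^ 2.

Definition d2A_ker (mu a1 a2 g v : R) : R :=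
  4 * rho_coef * v ^ 2 * den mu a1 v * den mu a2 v / den mu g v ^ 3.

Lemma rho_coef_pos : 0 < rho_coef.
Proof. apply Rinv_0_lt_compat. pose proof PI_RGT_0. nra. Qed.

Lemma den_pos mu g v : 0 < mu -> g < mu -> 0 <= v <= 1 -> 0 < den mu g v.
Proof.
  intros Hmu Hg Hv. unfold den. assert (0 <= v ^ 2 <= 1) by nra.
  destruct (Rle_lt_dec g 0); nra.
Qed.

Lemma continuity_2d_pt_den mu x t : continuity_2d_pt (den mu) x t.
Proof. unfold den. continuity_2d. Qed.

Section Kernels.
Variables mu a1 a2 : R.

Lemma is_derive_A_ker u t : den mu u t <> 0 ->
  is_derive (fun z => A_ker mu a1 a2 z t) u (dA_ker mu a1 a2 u t).
Proof.
  intros H. unfold A_ker, J_ker, dA_ker, dA_weight. unfold den in *.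
  auto_derive; [easy|field; easy].
Qed.

Lemma is_derive_dA_ker u t : den mu u t <> 0 ->
  is_derive (fun z => dA_ker mu a1 a2 z t) u (d2A_ker mu a1 a2 u t).
Proof.
  intros H. unfold dA_ker, d2A_ker, dA_weight. unfold den in *.
  auto_derive; [intro Hz; apply H; nra|field; easy].
Qed.

Lemma continuity_2d_pt_dA_ker u t : den mu u t <> 0 -> continuity_2d_pt (dA_ker mu a1 a2) u t.
Proof.
  intros H. unfold dA_ker, Rdiv, dA_weight. unfold den in *.
  continuity_2d. now apply pow_nonzero.
Qed.

Lemma continuity_2d_pt_d2A_ker u t : den mu u t <> 0 -> continuity_2d_pt (d2A_ker mu a1 a2) u t.
Proof.
  intros H. unfold d2A_ker, Rdiv. unfold den in *.
  continuity_2d. now apply pow_nonzero.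
Qed.

Lemma continuous_J_ker u t : den mu u t <> 0 -> continuous (J_ker mu u) t.
Proof.
  intros H. apply ex_derive_continuous_R. unfold J_ker. unfold den in *. auto_derive. easy.
Qed.

Lemma continuous_A_ker u t : den mu u t <> 0 -> continuous (A_ker mu a1 a2 u) t.
Proof.
  intros H. apply (continuous_mult_R (fun _ => (a1 - u) * (a2 - u))).
  - apply continuous_const.
  - now apply continuous_J_ker.
Qed.

Lemma continuous_dA_ker u t : den mu u t <> 0 -> continuous (dA_ker mu a1 a2 u) t.
Proof.
  intros H. apply ex_derive_continuous_R. unfold dA_ker, dA_weight. unfold den in *.
  auto_derive. intro Hz. apply H. nra.
Qed.

End Kernels.

Lemma is_derive_RInt_param_den (mu : R) (f df : R -> R -> R) x : 0 < mu -> x < mu ->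
  (forall u t, den mu u t <> 0 -> is_derive (fun z => f z t) u (df u t)) ->
  (forall u t, den mu u t <> 0 -> continuity_2d_pt df u t) ->
  (forall u t, den mu u t <> 0 -> continuous (f u) t) ->
  is_derive (fun y => RInt (f y) 0 1) x (RInt (df x) 0 1).
Proof.
  intros Hmu Hx Hd Hdc Hc.
  assert (Hden : forall u t, u < mu -> 0 <= t <= 1 -> den mu u t <> 0)
    by (intros; apply Rgt_not_eq, den_pos; lra).
  assert (Hnear : locally x (fun y => y < mu)) by now apply open_lt.
  replace (RInt (df x) 0 1) with (RInt (fun t => Derive (fun u => f u t) x) 0 1).
  2:{ apply RInt_ext. intros t Ht. rewrite Rmin_left, Rmax_right in Ht by lra.
      apply is_derive_unique, Hd, Hden; lra. }
  apply (is_derive_RInt_param f 0 1 x).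
  - apply (filter_imp (fun y => y < mu)); [|easy]. intros y Hy t Ht.
    apply Rmin_Rmax_bounds in Ht; [|lra]. eexists. apply Hd, Hden; easy.
  - intros t Ht. apply Rmin_Rmax_bounds in Ht; [|lra].
    apply continuity_2d_pt_ext_loc with (f := df); [|apply Hdc, Hden; easy].
    apply locally_2d_impl with (P := fun u v => den mu u v <> 0).
    + apply locally_2d_forall. intros u v Huv. symmetry. apply is_derive_unique, Hd, Huv.
    + apply continuity_2d_pt_neq_0; [apply continuity_2d_pt_den|apply Hden; easy].
  - apply (filter_imp (fun y => y < mu)); [|easy]. intros y Hy.
    apply ex_RInt_continuous_on; [lra|]. intros t Ht. apply Hc, Hden; easy.
Qed.

Section KernelBounds.
Variables mu a1 a2 : R.
Hypotheses (Hmu : 0 < mu) (Ha1 : a1 < mu) (Ha2 : a2 < mu).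
Local Notation wmin := (Rmin ((mu - a1) * (mu - a2)) (mu * (2 * mu - a1 - a2))).
Local Notation wsum := ((mu - a1) * (mu - a2) + mu * (2 * mu - a1 - a2)).

Lemma RInt_d2A_ker_pos g : g < mu -> 0 < RInt (d2A_ker mu a1 a2 g) 0 1.
Proof.
  intros Hg. pose proof rho_coef_pos. apply RInt_gt_0; [lra| |].
  - intros v Hv. unfold d2A_ker.
    assert (0 < den mu g v ^ 3) by (apply pow_lt, den_pos; lra).
    assert (0 < den mu a1 v) by (apply den_pos; lra).
    assert (0 < den mu a2 v) by (apply den_pos; lra).
    assert (0 < v ^ 2) by (apply pow_lt; lra).
    apply Rdiv_lt_0_compat; [repeat apply Rmult_lt_0_compat|]; lra.
  - intros v Hv. assert (0 < den mu g v) by (apply den_pos; lra).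
    apply ex_derive_continuous_R. unfold d2A_ker. unfold den in *.
    auto_derive. repeat apply Rmult_integral_contrapositive_currified; lra.
Qed.

Lemma dA_weight_bounds v : 0 <= v <= 1 -> wmin <= dA_weight mu a1 a2 v <= wsum.
Proof.
  intros Hv. unfold dA_weight.
  assert (0 < (mu - a1) * (mu - a2)) by (apply Rmult_lt_0_compat; lra).
  assert (0 < mu * (2 * mu - a1 - a2)) by (apply Rmult_lt_0_compat; lra).
  pose proof (Rmin_l ((mu - a1) * (mu - a2)) (mu * (2 * mu - a1 - a2))).
  pose proof (Rmin_r ((mu - a1) * (mu - a2)) (mu * (2 * mu - a1 - a2))).
  assert (0 <= v ^ 2 <= 1) by nra. nra.
Qed.

Section Far.
Variable g : R.
Local Notation e := (mu - g).
Hypotheses (He : mu <= e) (Hw : 2 * wsum <= e * mu).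

(* [mu + 2 e (1 - v)] dominates [den mu g v] and gives a kernel with an explicit log primitive. *)
Lemma dA_ker_le_far v : 0 <= v <= 1 ->
  dA_ker mu a1 a2 g v <= - rho_coef * e * (2 * v - 1) / (mu + 2 * e * (1 - v)).
Proof.
  intros Hv. pose proof rho_coef_pos. pose proof (dA_weight_bounds v Hv).
  set (D := den mu g v). set (E := mu + 2 * e * (1 - v)).
  assert (Hw1 : 0 <= 1 - v ^ 2) by nra.
  assert (HD : mu <= D) by (unfold D, den; nra).
  assert (HDE : D <= E).
  { replace E with (D + (1 - v) * (2 * mu - g * (1 - v))) by (unfold D, E, den; ring).
    assert (0 <= (1 - v) * (2 * mu - g * (1 - v))) by (apply Rmult_le_pos; nra). lra. }
  assert (Hnum : dA_weight mu a1 a2 v - e * (D + mu * v ^ 2) <= - e * D / 2)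
    by (assert (0 <= mu * v ^ 2) by nra; nra).
  assert (Hv2 : (2 * v - 1) * D <= v ^ 2 * E).
  { assert (0 <= (v - 1) ^ 2 * E) by (apply Rmult_le_pos; nra).
    destruct (Rle_lt_dec (2 * v - 1) 0); nra. }
  unfold dA_ker. fold D. apply Rdiv_le_cross; [apply pow_lt; lra|lra|].
  apply Rle_trans with (2 * rho_coef * v ^ 2 * (- e * D / 2) * E).
  - apply Rmult_le_compat_r; [lra|]. apply Rmult_le_compat_l; [|easy]. nra.
  - replace (2 * rho_coef * v ^ 2 * (- e * D / 2) * E)
      with (- (rho_coef * e * D) * (v ^ 2 * E)) by field.
    replace (- rho_coef * e * (2 * v - 1) * D ^ 2)
      with (- (rho_coef * e * D) * ((2 * v - 1) * D)) by ring.
    apply Rmult_le_compat_neg_l; [|easy]. assert (0 < rho_coef * e) by nra. nra.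
Qed.

Lemma RInt_dA_ker_le_far :
  RInt (dA_ker mu a1 a2 g) 0 1 <= rho_coef * (1 - (ln (mu + 2 * e) - ln mu) / 2).
Proof.
  pose proof rho_coef_pos. assert (He0 : 0 < e) by lra.
  pose proof (is_RInt_affine_ratio (- rho_coef) mu e Hmu He0) as Hb.
  apply Rle_trans with (- rho_coef * ((1 + mu / e) / 2 * (ln (mu + 2 * e) - ln mu) - 1)).
  - rewrite <- (is_RInt_unique _ _ _ _ Hb). apply RInt_le; [lra| | |].
    + apply ex_RInt_continuous_on; [lra|]. intros v Hv.
      apply continuous_dA_ker, Rgt_not_eq, den_pos; lra.
    + now exists (- rho_coef * ((1 + mu / e) / 2 * (ln (mu + 2 * e) - ln mu) - 1)).
    + intros v Hv. apply dA_ker_le_far. lra.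
  - set (L := ln (mu + 2 * e) - ln mu).
    assert (0 <= L) by (enough (ln mu <= ln (mu + 2 * e)) by (unfold L; lra); apply ln_le; lra).
    assert (0 <= mu / e * L) by (apply Rmult_le_pos; [apply Rlt_le, Rdiv_lt_0_compat|]; lra).
    nra.
Qed.

End Far.

Section Near.
Variable g : R.
Local Notation e := (mu - g).
Hypotheses (He : 0 < e <= 1) (Hw : e * (1 + 2 * mu) <= wmin / 2).

Lemma dA_ker_ge_near v : 0 <= v <= 1 ->
  rho_coef * wmin * (v ^ 2 / (mu * v ^ 2 + e) ^ 2) <= dA_ker mu a1 a2 g v.
Proof.
  intros Hv. pose proof rho_coef_pos. pose proof (dA_weight_bounds v Hv).
  assert (Hv2 : 0 <= v ^ 2 <= 1) by nra.
  set (D := den mu g v).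
  assert (HD0 : 0 < D) by (apply den_pos; lra).
  assert (HD : D <= mu * v ^ 2 + e) by (unfold D, den; nra).
  assert (Hnum : wmin / 2 <= dA_weight mu a1 a2 v - e * (D + mu * v ^ 2)).
  { assert (e * (D + mu * v ^ 2) <= e * (1 + 2 * mu)) by (apply Rmult_le_compat_l; nra). lra. }
  unfold dA_ker. fold D.
  replace (rho_coef * wmin * (v ^ 2 / (mu * v ^ 2 + e) ^ 2))
    with (rho_coef * wmin * v ^ 2 / (mu * v ^ 2 + e) ^ 2) by (field; lra).
  apply Rdiv_le_cross; [apply pow_lt; lra|apply pow_lt; lra|].
  assert (HD2 : D ^ 2 <= (mu * v ^ 2 + e) ^ 2) by (apply pow_incr; lra).
  assert (0 <= rho_coef * v ^ 2) by nra.
  assert (Hwmin0 : 0 < wmin) by (apply Rmin_glb_lt; apply Rmult_lt_0_compat; lra).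
  apply Rle_trans with (rho_coef * v ^ 2 * wmin * (mu * v ^ 2 + e) ^ 2).
  - replace (rho_coef * wmin * v ^ 2 * D ^ 2) with (rho_coef * v ^ 2 * wmin * D ^ 2) by ring.
    apply Rmult_le_compat_l; [nra|easy].
  - replace (2 * rho_coef * v ^ 2 * (dA_weight mu a1 a2 v - e * (D + mu * v ^ 2)))
      with (rho_coef * v ^ 2 * (2 * (dA_weight mu a1 a2 v - e * (D + mu * v ^ 2)))) by ring.
    apply Rmult_le_compat_r; [apply pow2_ge_0|]. apply Rmult_le_compat_l; lra.
Qed.

Lemma RInt_dA_ker_ge_near : e <= mu ->
  rho_coef * wmin * ((PI / 4 / sqrt (mu * e) - 1 / mu) / (2 * mu))
    <= RInt (dA_ker mu a1 a2 g) 0 1.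
Proof.
  intros Hemu. pose proof rho_coef_pos.
  assert (Hwmin0 : 0 < wmin) by (apply Rmin_glb_lt; apply Rmult_lt_0_compat; lra).
  pose proof (is_RInt_sq_ratio mu e Hmu ltac:(lra)) as Hint.
  apply Rle_trans with (rho_coef * wmin * RInt (fun v => v ^ 2 / (mu * v ^ 2 + e) ^ 2) 0 1).
  { apply Rmult_le_compat_l; [nra|]. now apply RInt_sq_ratio_ge. }
  rewrite <- (RInt_scal (V := R_CompleteNormedModule)) by (eexists; exact Hint).
  apply RInt_le; [lra| | |].
  - apply (ex_RInt_scal (V := R_CompleteNormedModule)). eexists; exact Hint.
  - apply ex_RInt_continuous_on; [lra|]. intros v Hv.
    apply continuous_dA_ker, Rgt_not_eq, den_pos; lra.
  - intros v Hv. apply dA_ker_ge_near. lra.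
Qed.

End Near.

End KernelBounds.

Lemma continuous_rho m M : 0 < M -> continuous (rho m) M.
Proof.
  intros HM. unfold rho. apply continuous_mult_R; [apply continuous_mult_R|].
  - apply continuous_const.
  - apply continuous_sqrt_comp, ex_derive_continuous_R. auto_derive. lra.
  - apply continuous_Rinv. lra.
Qed.

Section Spectral.
Variables m a1 a2 : R.
Hypothesis hm : 0 < m.
Local Notation mu := (4 * m ^ 2).

Lemma mu_pos : 0 < mu.
Proof. nra. Qed.

Lemma rho_to_half_line v : 0 <= v < 1 ->
  rho m (to_half_line mu v) = rho_coef * v * (1 - v ^ 2) / mu.
Proof.
  intros Hv. pose proof mu_pos. assert (0 < 1 - v ^ 2) by nra.
  unfold rho, to_half_line.
  replace (1 - mu / (mu / (1 - v ^ 2))) with (v ^ 2) by (field; split; lra).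
  rewrite sqrt_pow2 by lra. unfold rho_coef. pose proof PI_RGT_0.
  field. repeat split; lra.
Qed.

(* After [M = to_half_line mu v] the density and Jacobian combine to [2 rho_coef v^2 / (1 - v^2)],
   and [M - g = den mu g v / (1 - v^2)]. *)
Lemma J_eq_RInt g : g < mu -> J m g = RInt (J_ker mu g) 0 1.
Proof.
  intros Hg. pose proof mu_pos.
  apply is_RInt_gen_unique, is_RInt_gen_to_half_line; [easy| | |].
  - intros M HM. apply continuous_mult_R; [apply continuous_rho; lra|].
    apply ex_derive_continuous_R. auto_derive. lra.
  - intros v Hv. rewrite rho_to_half_line by easy.
    assert (0 < 1 - v ^ 2) by nra. assert (0 < den mu g v) by (apply den_pos; lra).
    unfold J_ker, to_half_line. unfold den in *. field. lra.
  - intros v Hv. apply continuous_J_ker, Rgt_not_eq, den_pos; lra.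
Qed.

Lemma Afun_eq_RInt g : g < mu -> Afun m a1 a2 g = RInt (A_ker mu a1 a2 g) 0 1.
Proof.
  intros Hg. unfold Afun, A_ker. rewrite J_eq_RInt by easy.
  symmetry. apply (RInt_scal (V := R_CompleteNormedModule)).
  apply ex_RInt_continuous_on; [lra|].
  intros v Hv. apply continuous_J_ker, Rgt_not_eq, den_pos; [apply mu_pos|easy|easy].
Qed.

Lemma is_derive_Afun g : g < mu -> is_derive (Afun m a1 a2) g (RInt (dA_ker mu a1 a2 g) 0 1).
Proof.
  intros Hg. apply is_derive_ext_loc with (f := fun y => RInt (A_ker mu a1 a2 y) 0 1).
  - apply (filter_imp (fun y => y < mu)); [|now apply open_lt].
    intros y Hy. symmetry. now apply Afun_eq_RInt.
  - apply (is_derive_RInt_param_den mu); [apply mu_pos|easy|..].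
    + apply is_derive_A_ker.
    + apply continuity_2d_pt_dA_ker.
    + apply continuous_A_ker.
Qed.

Lemma Derive_Afun g : g < mu -> Derive (Afun m a1 a2) g = RInt (dA_ker mu a1 a2 g) 0 1.
Proof. intros Hg. now apply is_derive_unique, is_derive_Afun. Qed.

Lemma is_derive_Derive_Afun g : g < mu ->
  is_derive (Derive (Afun m a1 a2)) g (RInt (d2A_ker mu a1 a2 g) 0 1).
Proof.
  intros Hg. apply is_derive_ext_loc with (f := fun y => RInt (dA_ker mu a1 a2 y) 0 1).
  - apply (filter_imp (fun y => y < mu)); [|now apply open_lt].
    intros y Hy. symmetry. now apply Derive_Afun.
  - apply (is_derive_RInt_param_den mu); [apply mu_pos|easy|..].
    + apply is_derive_dA_ker.
    + apply continuity_2d_pt_d2A_ker.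
    + apply continuous_dA_ker.
Qed.

Lemma is_RInt_gen_d2A g : g < mu ->
  is_RInt_gen (fun M => rho m M * (2 * (M - a1) * (M - a2) / (M - g) ^ 3))
    (at_point mu) (Rbar_locally p_infty) (RInt (d2A_ker mu a1 a2 g) 0 1).
Proof.
  intros Hg. pose proof mu_pos. apply is_RInt_gen_to_half_line; [easy| | |].
  - intros M HM. apply continuous_mult_R; [apply continuous_rho; lra|].
    apply ex_derive_continuous_R. auto_derive.
    repeat apply Rmult_integral_contrapositive_currified; lra.
  - intros v Hv. rewrite rho_to_half_line by easy.
    assert (0 < 1 - v ^ 2) by nra. assert (0 < den mu g v) by (apply den_pos; lra).
    unfold d2A_ker, to_half_line. unfold den in *. field. lra.
  - intros v Hv. assert (0 < den mu g v) by (apply den_pos; lra).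
    apply ex_derive_continuous_R. unfold d2A_ker. unfold den in *.
    auto_derive. repeat apply Rmult_integral_contrapositive_currified; lra.
Qed.

Hypotheses (ha1 : a1 < mu) (ha2 : a2 < mu).

Lemma Derive_Afun_incr x y : x < y -> y < mu ->
  Derive (Afun m a1 a2) x < Derive (Afun m a1 a2) y.
Proof.
  apply (incr_of_derive_pos _ mu (fun g => RInt (d2A_ker mu a1 a2 g) 0 1)).
  - exact is_derive_Derive_Afun.
  - intros g Hg. apply RInt_d2A_ker_pos; [apply mu_pos|easy..].
Qed.

Lemma lim_Derive_Afun_m_infty : is_lim (Derive (Afun m a1 a2)) m_infty m_infty.
Proof.
  pose proof mu_pos. pose proof rho_coef_pos.
  apply (filterlim_le_m_infty (fun g => rho_coef * (1 - (ln (mu + 2 * (mu - g)) - ln mu) / 2))).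
  - set (W := (mu - a1) * (mu - a2) + mu * (2 * mu - a1 - a2)).
    exists (mu - Rmax mu (2 * W / mu)). intros g Hg.
    assert (Hfar : Rmax mu (2 * W / mu) < mu - g) by lra.
    apply Rmax_Rlt in Hfar as [Hg1 Hg2].
    rewrite Derive_Afun by lra. apply RInt_dA_ker_le_far; try lra.
    apply Rlt_div_l in Hg2; unfold W in Hg2; lra.
  - now apply is_lim_ln_gap_m_infty.
Qed.

Lemma lim_Derive_Afun_at_left :
  filterlim (Derive (Afun m a1 a2)) (at_left mu) (Rbar_locally p_infty).
Proof.
  pose proof mu_pos. pose proof rho_coef_pos.
  set (wmin := Rmin ((mu - a1) * (mu - a2)) (mu * (2 * mu - a1 - a2))).
  assert (Hwmin : 0 < wmin) by (apply Rmin_glb_lt; apply Rmult_lt_0_compat; lra).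
  apply (filterlim_ge_p_infty
           (fun g => rho_coef * wmin * ((PI / 4 / sqrt (mu * (mu - g)) - 1 / mu) / (2 * mu)))).
  - set (d := Rmin 1 (Rmin (wmin / 2 / (1 + 2 * mu)) mu)).
    assert (Hd : 0 < d).
    { apply Rmin_glb_lt; [lra|apply Rmin_glb_lt; [apply Rdiv_lt_0_compat|]; lra]. }
    exists (mkposreal d Hd). intros g Hball Hg.
    change (Rabs (g - mu) < d) in Hball. rewrite Rabs_left in Hball by lra.
    assert (d <= 1 /\ d <= wmin / 2 / (1 + 2 * mu) /\ d <= mu) as [Hd1 [Hd2 Hd3]].
    { unfold d. repeat split;
        [apply Rmin_l|eapply Rle_trans; [apply Rmin_r|apply Rmin_l]
        |eapply Rle_trans; [apply Rmin_r|apply Rmin_r]]. }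
    apply Rle_div_r in Hd2; [|lra].
    assert ((mu - g) * (1 + 2 * mu) <= d * (1 + 2 * mu)) by (apply Rmult_le_compat_r; lra).
    rewrite Derive_Afun by easy. apply RInt_dA_ker_ge_near; unfold wmin in *; lra.
  - apply filterlim_inv_sqrt_at_left; [nra|easy].
Qed.

End Spectral.

Theorem lemma4p10 (m a1 a2 : R) (hm : 0 < m)
  (ha1 : a1 < 4 * m ^ 2) (ha2 : a2 < 4 * m ^ 2) :
  (forall g, g < 4 * m ^ 2 ->
     ex_derive (Afun m a1 a2) g /\
     exists v, is_RInt_gen
                 (fun M => rho m M * (2 * (M - a1) * (M - a2) / (M - g) ^ 3))
                 (at_point (4 * m ^ 2)) (Rbar_locally p_infty) v
               /\ is_derive (Derive (Afun m a1 a2)) g v /\ 0 < v) /\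
  (forall x y t, x < 4 * m ^ 2 -> y < 4 * m ^ 2 -> 0 <= t <= 1 ->
     Afun m a1 a2 (t * x + (1 - t) * y)
       <= t * Afun m a1 a2 x + (1 - t) * Afun m a1 a2 y) /\
  (forall x y, x < y -> y < 4 * m ^ 2 ->
     Derive (Afun m a1 a2) x < Derive (Afun m a1 a2) y) /\
  is_lim (Derive (Afun m a1 a2)) m_infty m_infty /\
  filterlim (Derive (Afun m a1 a2)) (at_left (4 * m ^ 2)) (Rbar_locally p_infty) /\
  (forall y, exists g, g < 4 * m ^ 2 /\ Derive (Afun m a1 a2) g = y).
Proof.
  pose proof (mu_pos m hm) as Hmu.
  assert (HdA : forall g, g < 4 * m ^ 2 -> ex_derive (Afun m a1 a2) g)
    by (intros g Hg; eexists; now apply is_derive_Afun).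
  assert (Hincr := Derive_Afun_incr m a1 a2 hm ha1 ha2).
  split; [|split; [|split; [|split; [|split]]]].
  - intros g Hg. split; [now apply HdA|].
    exists (RInt (d2A_ker (4 * m ^ 2) a1 a2 g) 0 1). split; [|split].
    + now apply is_RInt_gen_d2A.
    + now apply is_derive_Derive_Afun.
    + now apply RInt_d2A_ker_pos.
  - apply convex_of_derive_nondecr; [easy|]. intros x y Hxy Hy. now apply Rlt_le, Hincr.
  - exact Hincr.
  - now apply lim_Derive_Afun_m_infty.
  - now apply lim_Derive_Afun_at_left.
  - apply onto_of_lim_m_infty_at_left.
    + intros g Hg. apply continuity_pt_of_ex_derive. eexists. now apply is_derive_Derive_Afun.
    + now apply lim_Derive_Afun_m_infty.
    + now apply lim_Derive_Afun_at_left.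
Qed.
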